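(* Let ${\bf p},{\bf q}\in[0,1]^K$ with $q_k\le p_k$ for all $k$, let ${\bf u},{\bf v}\in\mathcal{S}_K$, and let $\Pi_{({\bf p},{\bf q})}\subseteq\mathcal{S}_K$ be an atomic lower and upper probability (ALUP) model generated by $({\bf p},{\bf q})$. If the aggregation scheme $({\bf u},{\bf v})$ induces Simpson's paradox in $({\bf p},{\bf q})$, then it incurs sure loss with respect to itself on $\Pi_{({\bf p},{\bf q})}$.
   Context: $\mathcal{S}_K=\{(v_1,\dots,v_K):\sum_k v_k=1,\ v_k\ge 0\}$. An ALUP model generated by $({\bf p},{\bf q})$ is a closed convex set $\Pi_{({\bf p},{\bf q})}$ of vectors $\boldsymbol\pi\in\mathcal{S}_K$ such that $\sup_{\boldsymbol\pi\in\Pi_{({\bf p},{\bf q})}}\pi_k=p_k$ and $\inf_{\boldsymbol\pi\in\Pi_{({\bf p},{\bf q})}}\pi_k=q_k$ for each $k$. The scheme $({\bf u},{\bf v})$ induces Simpson's paradox in $({\bf p},{\bf q})$ if ${\bf p}^\top{\bf u}<{\bf q}^\top{\bf v}$ or ${\bf q}^\top{\bf u}>{\bf p}^\top{\bf v}$. It incurs sure loss with respect to itself on a set $\Pi\subseteq\mathcal{S}_K$ if $\sup_{\boldsymbol\pi\in\Pi}\boldsymbol\pi^\top{\bf u}<\inf_{\boldsymbol\pi\in\Pi}\boldsymbol\pi^\top{\bf v}$ or $\inf_{\boldsymbol\pi\in\Pi}\boldsymbol\pi^\top{\bf u}>\sup_{\boldsymbol\pi\in\Pi}\boldsymbol\pi^\top{\bf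 v}$. *)

From HB Require Import structures.
From mathcomp Require Import all_boot all_order all_algebra.
From mathcomp Require Import all_classical all_reals all_analysis.
Set Implicit Arguments. Unset Strict Implicit. Unset Printing Implicit Defensive.
Import Order.TTheory GRing.Theory Num.Theory.
Import numFieldNormedType.Exports.
Local Open Scope classical_set_scope.
Local Open Scope ring_scope.

Definition dotv (R : realType) (K : nat) (x y : 'rV[R]_K) : R :=
  \sum_(k < K) x 0 k * y 0 k.

Definition simplex (R : realType) (K : nat) : set 'rV[R]_K :=
  [set v | \sum_(k < K) v 0 k = 1 /\ forall k, 0 <= v 0 k].

Arguments simplex R K : clear implicits.

Definition convex_set (R : realType) (K : nat) (A : set 'rV[R]_K) : Prop :=
  forall x y (t : R), A x -> A y -> 0 <= t <= 1 -> A (t *: x + (1 - t) *: y).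

Definition ALUP (R : realType) (K : nat) (p q : 'rV[R]_K) (Pi : set 'rV[R]_K) : Prop :=
  [/\ Pi `<=` simplex R K, closed Pi, convex_set Pi &
      forall k : 'I_K,
        sup [set pi 0 k | pi in Pi] = p 0 k /\
        inf [set pi 0 k | pi in Pi] = q 0 k].

Definition simpson_paradox (R : realType) (K : nat) (u v p q : 'rV[R]_K) : Prop :=
  dotv p u < dotv q v \/ dotv q u > dotv p v.

Definition sure_loss_self (R : realType) (K : nat) (u v : 'rV[R]_K) (Pi : set 'rV[R]_K) : Prop :=
  sup [set dotv pi u | pi in Pi] < inf [set dotv pi v | pi in Pi] \/
  inf [set dotv pi u | pi in Pi] > sup [set dotv pi v | pi in Pi].

From HB Require Import structures.
From mathcomp Require Import all_boot all_order all_algebra.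
From mathcomp Require Import all_classical all_reals all_analysis.
Import Order.TTheory GRing.Theory Num.Theory.
Local Open Scope classical_set_scope.
Local Open Scope ring_scope.

(* Every pi in an ALUP model lies coordinatewise between q and p, so for a
   nonnegative weight vector w the value pi^T w lies between q^T w and p^T w.
   Simpson's paradox, p^T u < q^T v (or q^T u > p^T v), therefore separates
   the ranges of pi^T u and pi^T v over the model. *)

Lemma simplex_coord_le1 (R : realType) (K : nat) (x : 'rV[R]_K) (k : 'I_K) :
  simplex R K x -> x 0 k <= 1.
Proof.
move=> [sum1 ge0]; rewrite -sum1 (bigD1 k) //= lerDl.
by apply: sumr_ge0 => i _; exact: ge0.
Qed.

Lemma ler_dotvl (R : realType) (K : nat) (x y w : 'rV[R]_K) :
  (forall k, 0 <= w 0 k) -> (forall k, x 0 k <= y 0 k) -> dotv x w <= dotv y w.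
Proof. by move=> w_ge0 le_xy; apply: ler_sum => k _; exact: ler_wpM2r. Qed.

Section ALUPModel.

Set Implicit Arguments.

Variables (R : realType) (K : nat) (p q : 'rV[R]_K) (Pi : set 'rV[R]_K).
Hypothesis alup : ALUP p q Pi.

Lemma ALUP_coord_bounds (pi : 'rV[R]_K) (k : 'I_K) :
  Pi pi -> q 0 k <= pi 0 k <= p 0 k.
Proof.
case: alup => sub _ _ /(_ k) [<- <-] Pi_pi; apply/andP; split.
- apply: ge_inf; last by exists pi.
  by exists 0 => _ [x Pi_x <-]; case: (sub x Pi_x).
- apply: ub_le_sup; last by exists pi.
  by exists 1 => _ [x Pi_x <-]; exact: simplex_coord_le1 (sub x Pi_x).
Qed.

(* sup and inf of the empty set are 0, so an empty model forces p = q = 0. *)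
Lemma ALUP_set0_dotv (w : 'rV[R]_K) :
  Pi = set0 -> dotv p w = 0 /\ dotv q w = 0.
Proof.
case: alup => _ _ _ bounds Pi0.
have img0 k : [set pi 0 k | pi in Pi] = set0 by rewrite Pi0 image_set0.
by split; rewrite /dotv big1 // => k _;
  rewrite -?(bounds k).1 -?(bounds k).2 img0 ?sup0 ?inf0 mul0r.
Qed.

Section NonnegWeight.

Variable w : 'rV[R]_K.
Hypothesis w_ge0 : forall k, 0 <= w 0 k.

Lemma ALUP_sup_dotv_le :
  Pi !=set0 -> sup [set dotv pi w | pi in Pi] <= dotv p w.
Proof.
move=> [pi Pi_pi]; apply: ge_sup; first by exists (dotv pi w), pi.
move=> _ [x Pi_x <-]; apply: ler_dotvl => // k.
by case/andP: (ALUP_coord_bounds k Pi_x).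
Qed.

Lemma ALUP_inf_dotv_ge :
  Pi !=set0 -> dotv q w <= inf [set dotv pi w | pi in Pi].
Proof.
move=> [pi Pi_pi]; apply: lb_le_inf; first by exists (dotv pi w), pi.
move=> _ [x Pi_x <-]; apply: ler_dotvl => // k.
by case/andP: (ALUP_coord_bounds k Pi_x).
Qed.

End NonnegWeight.

End ALUPModel.

Theorem lemma4p2 (R : realType) (K : nat) (p q u v : 'rV[R]_K) (Pi : set 'rV[R]_K) :
  (forall k : 'I_K, 0 <= q 0 k /\ q 0 k <= p 0 k /\ p 0 k <= 1) ->
  simplex R K u -> simplex R K v ->
  ALUP p q Pi ->
  simpson_paradox u v p q ->
  sure_loss_self u v Pi.
Proof.
move=> _ [_ u_ge0] [_ v_ge0] alup paradox.
have [Pi0|/set0P Pi_ne0] := eqVneq Pi set0.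
  have [pu0 qu0] := ALUP_set0_dotv alup u Pi0.
  have [pv0 qv0] := ALUP_set0_dotv alup v Pi0.
  by move: paradox; rewrite /simpson_paradox pu0 qu0 pv0 qv0 ltxx; case.
case: paradox => [pu_lt_qv|pv_lt_qu]; [left|right].
- exact: le_lt_trans (ALUP_sup_dotv_le alup u u_ge0 Pi_ne0)
    (lt_le_trans pu_lt_qv (ALUP_inf_dotv_ge alup v v_ge0 Pi_ne0)).
- exact: le_lt_trans (ALUP_sup_dotv_le alup v v_ge0 Pi_ne0)
    (lt_le_trans pv_lt_qu (ALUP_inf_dotv_ge alup u u_ge0 Pi_ne0)).
Qed.
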